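(* Under the standing assumptions below, if $n\ge 1/\alpha-1$, then $\hat Q^{\mathrm{oracle}}_{1-\alpha}<\frac{n}{\sqrt{n+1}}$ almost surely.
   Context: Setting: $n\ge 2$, $d\ge 1$ integers, $\alpha\in(0,1)$, $[m]:=\{1,\dots,m\}$. $E^1,\dots,E^{n+1}$ are exchangeable random vectors in $\mathbb{R}^d$. Assumption A: for each $j\in[d]$, the distribution of $E^i_j$ has no point masses, $E^i_j\ge0$ a.s., $\mathbb{E}[E^i_j]<\infty$, $0<\mathrm{Var}(E^i_j)<\infty$, and $E^1_j,\dots,E^{n+1}_j$ are a.s. pairwise distinct. Quantile: for $x=(x_1,\dots,x_n)\in\mathbb{R}^n$, $\hat Q_{1-\alpha}(x)$ is the $\lceil(1-\alpha)(n+1)\rceil$-th smallest value of the multiset $\{x_1,\dots,x_n,+\infty\}$. Oracle statistics: $\hat\mu^{\mathrm{oracle}}_j=\frac1{n+1}\sum_{i=1}^{n+1}E^i_j$, $\hat\sigma^{\mathrm{oracle}}_j=\sqrt{\frac1n\sum_{i=1}^{n+1}(E^i_j-\hat\mu^{\mathrm{oracle}}_j)^2}$. $\Phi(t;\mu,\sigma):=\max_{1\le j\le d}\frac{t_j-\mu_j}{\sigma_j}$. $S^i_{\mathrm{oracle}}:=\Phi(E^i;\hat\mu^{\mathrm{oracle}},\hat\sigma^{\mathrm{oracle}})$, and $\hat Q^{\mathrm{oracle}}_{1-\alpha}:=\hat Q_{1-\alpha}(S^1_{\mathrm{oracle}},\dots,S^n_{\mathrm{oracle}})$. *)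

From HB Require Import structures.
From mathcomp Require Import all_boot all_order all_algebra all_fingroup.
From mathcomp Require Import all_classical all_reals all_analysis.
Set Implicit Arguments. Unset Strict Implicit. Unset Printing Implicit Defensive.
Import Order.TTheory GRing.Theory Num.Theory.
Local Open Scope classical_set_scope.
Local Open Scope ring_scope.

Section Defs.
Context {dT : measure_display} {T : measurableType dT} {R : realType}.

(* \hat Q_{1-alpha}(x): the ceil((1-alpha)(m+1))-th smallest element of the
   multiset {x_1,...,x_m, +oo} (values taken in the extended reals). *)
Definition conf_quantile (m : nat) (alpha : R) (x : 'I_m -> \bar R) : \bar R :=
  nth +oo%E (sort (fun a b : \bar R => (a <= b)%O) (rcons [seq x i | i <- enum 'I_m] +oo%E))
      (`|Num.ceil ((1 - alpha) * m.+1%:R)|%N - 1).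

Definition mu_oracle (n d : nat) (E : 'I_n.+1 -> 'I_d -> T -> R) (j : 'I_d) (w : T) : R :=
  n.+1%:R^-1 * \sum_(i < n.+1) E i j w.

Definition sigma_oracle (n d : nat) (E : 'I_n.+1 -> 'I_d -> T -> R) (j : 'I_d) (w : T) : R :=
  Num.sqrt (n%:R^-1 * \sum_(i < n.+1) (E i j w - mu_oracle E j w) ^+ 2).

(* Phi(t; mu, sigma) = max_j (t_j - mu_j)/sigma_j (finite when d >= 1) *)
Definition Phi (d : nat) (t mu sigma : 'I_d -> R) : \bar R :=
  \big[Order.max/-oo%E]_(j < d) ((t j - mu j) / sigma j)%:E.

(* S^i_oracle for i in [n] (calibration points are the first n indices) *)
Definition S_oracle (n d : nat) (E : 'I_n.+1 -> 'I_d -> T -> R) (i : 'I_n) (w : T) : \bar R :=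
  Phi (fun j => E (widen_ord (leqnSn n) i) j w) (fun j => mu_oracle E j w)
      (fun j => sigma_oracle E j w).

Definition Q_oracle (n d : nat) (alpha : R) (E : 'I_n.+1 -> 'I_d -> T -> R) (w : T) : \bar R :=
  conf_quantile alpha (fun i => S_oracle E i w).

End Defs.

(* Exchangeability of (E^1,...,E^{n+1}): for every permutation s of the indices,
   the joint law of (E^{s(i)})_i equals that of (E^i)_i, expressed on all
   measurable rectangles (which determine the joint law). *)
Definition exchangeable {dT : measure_display} {T : measurableType dT} {R : realType}
  (P : probability T R) (m d : nat) (E : 'I_m -> 'I_d -> T -> R) : Prop :=
  forall (s : {perm 'I_m}) (B : 'I_m -> 'I_d -> set R),
    (forall i j, measurable (B i j)) ->
    P (\bigcap_(i in [set: 'I_m]) \bigcap_(j in [set: 'I_d]) (E (s i) j @^-1` B i j))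
    = P (\bigcap_(i in [set: 'I_m]) \bigcap_(j in [set: 'I_d]) (E i j @^-1` B i j)).

From HB Require Import structures.
From mathcomp Require Import all_boot all_order all_algebra all_fingroup.
From mathcomp Require Import all_classical all_reals all_analysis.
From mathcomp Require Import ring lra.
Set Implicit Arguments.
Unset Strict Implicit.
Unset Printing Implicit Defensive.
Import Order.TTheory GRing.Theory Num.Theory.
Local Open Scope classical_set_scope.
Local Open Scope ring_scope.

(* The oracle mean and deviation include the test point, so every oracle score
   is a studentized deviation of one of n+1 reals from their own mean.
   Samuelson's inequality bounds such a deviation by n / sqrt(n+1), strictly
   as soon as the other n values are not all equal, which almost-sure
   distinctness guarantees.  The hypothesis n >= 1/alpha - 1 makes the rank of
   the conformal quantile at most n, so the quantile is one of the finite
   scores rather than the added +oo. *)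

Lemma samuelson_strict (R : realFieldType) (n : nat) (b : 'I_n.+1 -> R)
    (k i1 i2 : 'I_n.+1) :
  \sum_i b i = 0 -> i1 != k -> i2 != k -> b i1 != b i2 ->
  n.+1%:R * b k ^+ 2 < n%:R * \sum_i b i ^+ 2.
Proof.
move=> sum0 i1k i2k b12.
have card_k : #|[pred i | i != k]| = n.
  by rewrite (eq_card (B := predC1 k)) // cardC1 card_ord.
have n0 : n%:R != 0 :> R.
  by rewrite pnatr_eq0 -lt0n -card_k; apply/card_gt0P; exists i1.
have sum_k : \sum_(i | i != k) b i = - b k.
  by move: sum0; rewrite (bigD1 k) //= => /eqP; rewrite addrC addr_eq0 => /eqP.
set S2 := \sum_(i | i != k) b i ^+ 2.
(* Shifting the other n values by b k / n centres them; their square sum is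
   then S2 - b k ^ 2 / n. *)
have shifted : \sum_(i | i != k) (b i + b k / n%:R) ^+ 2 = S2 - b k ^+ 2 / n%:R.
  under eq_bigr do rewrite sqrrD.
  rewrite !big_split /= -mulr_suml sum_k -/S2 sumr_const card_k -mulr_natr.
  by field.
have shifted_gt0 : 0 < S2 - b k ^+ 2 / n%:R.
  rewrite -shifted lt_def sumr_ge0 ?andbT => [|i _]; last exact: sqr_ge0.
  apply/negP => /eqP /psumr_eq0P zero.
  have {}zero := zero (fun i _ => sqr_ge0 _).
  have /eqP := zero i1 i1k; have /eqP := zero i2 i2k.
  rewrite !sqrf_eq0 => /eqP e2 /eqP e1.
  by move: b12; rewrite -(addrK (b k / n%:R) (b i1)) e1 -e2 addrK eqxx.
have npos : 0 < n%:R :> R by rewrite lt0r n0 ler0n.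
rewrite (bigD1 k) //= -/S2 -natr1.
have := mulr_gt0 npos shifted_gt0.
by rewrite mulrBr mulrCA mulfV // mulr1; lra.
Qed.

Lemma studentized_lt (R : rcfType) (n : nat) (x V : R) :
  (0 < n)%N -> n.+1%:R * x ^+ 2 < n%:R * V ->
  x / Num.sqrt (n%:R^-1 * V) < n%:R / Num.sqrt n.+1%:R.
Proof.
move=> n_gt0 samuelson.
have npos : 0 < n%:R :> R by rewrite ltr0n.
have Vpos : 0 < V.
  by rewrite -(pmulr_rgt0 _ npos); apply: le_lt_trans samuelson; rewrite mulr_ge0 ?sqr_ge0.
have bound_gt0 : 0 < n%:R / Num.sqrt n.+1%:R :> R by rewrite divr_gt0 ?sqrtr_gt0 ?ltr0n.
have [x_le0 | x_gt0] := lerP x 0.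
  by apply: le_lt_trans bound_gt0; rewrite mulr_le0_ge0 ?invr_ge0 ?sqrtr_ge0.
rewrite -(ltr_pXn2r (n := 2)) // ?nnegrE ?divr_ge0 ?sqrtr_ge0 ?ltW //.
rewrite !expr_div_n !sqr_sqrtr ?mulr_ge0 ?invr_ge0 ?ler0n ?ltW //.
rewrite ltr_pdivrMr ?mulr_gt0 ?invr_gt0 // mulrAC ltr_pdivlMr ?ltr0n //.
by rewrite [n%:R ^+ 2]expr2 -[ltRHS]mulrA mulVKf ?gt_eqF // mulrC.
Qed.

Lemma studentized_deviation_lt (R : rcfType) (n : nat) (a : 'I_n.+1 -> R)
    (k : 'I_n.+1) :
  (2 <= n)%N -> (forall i i', i != i' -> a i != a i') ->
  (a k - n.+1%:R^-1 * \sum_(i < n.+1) a i) /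
    Num.sqrt (n%:R^-1 * \sum_(i < n.+1) (a i - n.+1%:R^-1 * \sum_(i < n.+1) a i) ^+ 2)
  < n%:R / Num.sqrt n.+1%:R.
Proof.
move=> n_ge2 a_inj.
set m := n.+1%:R^-1 * _.
have sum_centered : \sum_i (a i - m) = 0.
  rewrite sumrB sumr_const card_ord -mulr_natl /m mulrA mulfV ?pnatr_eq0 //.
  by rewrite mul1r subrr.
have : (1 < #|[pred i | i != k]|)%N.
  by rewrite (eq_card (B := predC1 k)) // cardC1 card_ord.
case/card_gt1P => i1 [i2 [i1k i2k i12]].
apply: studentized_lt; first exact: leq_trans n_ge2.
apply: (samuelson_strict (b := fun i => a i - m) sum_centered i1k i2k).
by rewrite /= (can_eq (subrK m)) a_inj.
Qed.

Lemma sort_rcons_pinfty (R : realType) (s : seq (\bar R)) :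
  sort (fun a b : \bar R => (a <= b)%O) (rcons s +oo%E) =
  rcons (sort (fun a b : \bar R => (a <= b)%O) s) +oo%E.
Proof.
have le_tot : total (fun a b : \bar R => (a <= b)%O) := le_total.
apply: le_sorted_eq; first exact: sort_sorted.
  have := sort_sorted le_tot s.
  by case: (sort _ s) => [|y t] //= t_sorted; rewrite rcons_path t_sorted leey.
by rewrite perm_sort perm_rcons perm_sym perm_rcons perm_cons perm_sort.
Qed.

Lemma conf_quantile_rank_lt (R : realType) (n : nat) (alpha : R) :
  0 < alpha < 1 -> alpha^-1 - 1 <= n%:R ->
  (`|Num.ceil ((1 - alpha) * n.+1%:R)|%N - 1 < n)%N.
Proof.
move=> /andP[a_gt0 a_lt1] n_ge.
have alpha_mass : 1 <= alpha * n.+1%:R.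
  have : alpha^-1 <= n.+1%:R by rewrite -natr1; lra.
  by rewrite -[X in X <= _ * _](mulfV (lt0r_neq0 a_gt0)) ler_pM2l.
have n_gt0 : (0 < n)%N.
  rewrite -(ltr0n R); have : 1 < alpha^-1 by rewrite invf_gt1.
  lra.
have ceil_le : Num.ceil ((1 - alpha) * n.+1%:R) <= n%:Z.
  rewrite ceil_le_int -[(n%:Z)%:~R]/(n%:R : R).
  by rewrite -natr1 in alpha_mass *; lra.
have ceil_ge0 : 0 <= Num.ceil ((1 - alpha) * n.+1%:R).
  rewrite ceil_ge0 (@lt_le_trans _ _ 0) ?ltrN10 //.
  by rewrite mulr_ge0 ?ler0n // subr_ge0 ltW.
have : (`|Num.ceil ((1 - alpha) * n.+1%:R)|%N <= n)%N.
  by rewrite -lez_nat abszE ger0_norm.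
by case: `|_|%N n_gt0 => [|r] //= _ r_le; rewrite subn1.
Qed.

Lemma conf_quantile_mem (R : realType) (n : nat) (alpha : R) (x : 'I_n -> \bar R) :
  0 < alpha < 1 -> alpha^-1 - 1 <= n%:R -> exists i, conf_quantile alpha x = x i.
Proof.
move=> alpha01 n_ge; rewrite /conf_quantile sort_rcons_pinfty.
have rank_lt := conf_quantile_rank_lt alpha01 n_ge.
rewrite nth_rcons size_sort size_map size_enum_ord rank_lt.
set s := [seq x i | i <- enum 'I_n].
have : nth +oo%E (sort (fun a b : \bar R => (a <= b)%O) s)
         (`|Num.ceil ((1 - alpha) * n.+1%:R)|%N - 1) \in s.
  by rewrite -(mem_sort (fun a b : \bar R => (a <= b)%O)) mem_nth // size_sort size_map size_enum_ord.
by case/mapP => i _ ->; exists i.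
Qed.

Lemma Phi_lt (R : realType) (d : nat) (t mu sigma : 'I_d -> R) (b : R) :
  (forall j, (t j - mu j) / sigma j < b) -> (Phi t mu sigma < b%:E)%E.
Proof.
move=> lt_b; rewrite /Phi; elim/big_ind: _ => [|y z|j _]; first exact: ltNyr.
  by rewrite gt_max => -> ->.
by rewrite lte_fin.
Qed.

Theorem lemma3p2 (dT : measure_display) (T : measurableType dT) (R : realType)
  (P : probability T R) (n d : nat) (alpha : R)
  (E : 'I_n.+1 -> 'I_d -> {RV P >-> R}) :
  (2 <= n)%N -> (1 <= d)%N -> 0 < alpha < 1 ->
  exchangeable P (fun i j => E i j : T -> R) ->
  (* Assumption A *)
  (forall i j (x : R), P (E i j @^-1` [set x]) = 0%E) ->
  (forall i j, {ae P, forall w, 0 <= E i j w}) ->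
  (forall i j, P.-integrable [set: T] (EFin \o E i j)) ->
  (forall i j, (0 < 'V_P[E i j : T -> R] < +oo)%E) ->
  (forall j, {ae P, forall w, forall i i' : 'I_n.+1, i != i' -> E i j w != E i' j w}) ->
  (* main hypothesis *)
  alpha^-1 - 1 <= n%:R ->
  {ae P, forall w,
      (Q_oracle alpha (fun i j => E i j : T -> R) w < (n%:R / Num.sqrt (n.+1%:R))%:E)%E}.
Proof.
move=> n_ge2 _ alpha01 _ _ _ _ _ distinct n_ge.
(* Only the almost-sure distinctness of each coordinate is needed. *)
apply: filterS (filter_forall (ae_filter_ringOfSetsType P) distinct) => w distinct_w.
rewrite /Q_oracle.
have [i ->] :=
  conf_quantile_mem (fun i => S_oracle (fun i j => E i j : T -> R) i w) alpha01 n_ge.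
apply: Phi_lt => j.
exact: (studentized_deviation_lt (a := fun i => E i j w)) (distinct_w j).
Qed.
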